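(* Let $p,q\ge1$, $\alpha:\mathbb Z_p\times\mathbb Z_q\to[0,1]$ a probability distribution with $\alpha(0,0)=0$, and let $\tilde{\mathcal T}_{*t}=e^{t\tilde{\mathcal L}_*}$ with $\tilde{\mathcal L}_*(x)=\sum_{(i,j)}\alpha(i,j)(J_p^i\otimes J_q^j)x(J_p^i\otimes J_q^j)^*-x$ on $\mathcal M_p(\mathbb C)\otimes\mathcal M_q(\mathbb C)$ (the pre-dual of the $\rho$-adjoint, $\rho=\frac{1}{pq}\mathbf1$, of the generator of the circulant semigroup $e^{t\mathcal L_*}$, $\mathcal L_*(x)=\sum_{(i,j)}\alpha(p-i,q-j)(J_p^i\otimes J_q^j)x(J_p^i\otimes J_q^j)^*-x$). With $\Phi_{m,n}(t)$ as below, for all $(i,j),(i',j')$ and $t\ge0$: (i) $\tilde{\mathcal T}_{*t}(|e_i\otimes e_j\rangle\langle e_{i'}\otimes e_{j'}|)=\frac{1}{pq}\sum_{m,n}\Phi_{p-m,q-n}(t)|e_{m+i}\otimes e_{n+j}\rangle\langle e_{m+i'}\otimes e_{n+j'}|$; equivalently, on each subspace $\mathrm{span}\{|e_i\otimes e_j\rangle\langle e_{i+k}\otimes e_{j+l}|\}$ the action corresponds to $e_i\otimes e_j\mapsto(e_i\otimes e_j)e^{tQ^{T}}$, $Q^T$ the transpose of $Q=\sum_{i,j}\alpha'(i,j)J_p^i\otimes J_q^j$; (ii) $\tilde\Omega_t=\frac{1}{pq}\sum_{m,n}\Phi_{p-m,q-n}(t)|u_{mn}\rangle\langle u_{mn}|$,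 where $u_{mn}=\frac{1}{\sqrt{pq}}\sum_{i,j}(e_i\otimes e_j)\otimes(e_{m+i}\otimes e_{n+j})$.
   Context: $\{e_j\}$ canonical bases (indices mod $p$, $q$); $J_p=\sum_j|e_j\rangle\langle e_{j+1}|$, similarly $J_q$; $\omega_p,\omega_q$ primitive roots of unity. $\alpha'(i,j)=\alpha(i,j)$ for $(i,j)\ne(0,0)$, $\alpha'(0,0)=-1$; $\lambda_{kl}=\sum_{i,j}\alpha'(i,j)\overline\omega_p^{ik}\overline\omega_q^{jl}$; $\Phi_{m,n}(t)=\sum_{k,l}\omega_p^{mk}\omega_q^{nl}e^{t\lambda_{kl}}$ (indices mod $p,q$). $\Omega_\rho=\frac{1}{\sqrt{pq}}\sum_{i,j}(e_i\otimes e_j)\otimes(e_i\otimes e_j)$ and $\tilde\Omega_t=(\mathrm{id}\otimes\tilde{\mathcal T}_{*t})(|\Omega_\rho\rangle\langle\Omega_\rho|)$. *)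

From HB Require Import structures.
From mathcomp Require Import all_boot all_order all_algebra.
From mathcomp Require Import all_classical all_reals all_analysis.
From mathcomp Require Import complex mxtens.
Set Implicit Arguments.
Unset Strict Implicit.
Unset Printing Implicit Defensive.
Import Order.TTheory GRing.Theory Num.Theory.
Import numFieldNormedType.Exports.
Local Open Scope ring_scope.
Local Open Scope complex_scope.

Definition cexp (R : realType) (z : R[i]) : R[i] :=
  limn (fun N => \sum_(k < N) ((z ^+ k / (k`!)%:R) : R[i]^o)).

Definition opexp (R : realType) (n : nat) (t : R)
  (L : 'M[R[i]]_n -> 'M[R[i]]_n) (x : 'M[R[i]]_n) : 'M[R[i]]_n :=
  limn (fun N => \sum_(k < N) ((t ^+ k / (k`!)%:R)%:C *: iter k L x)).

Definition adj (R : realType) (m n : nat) (A : 'M[R[i]]_(m, n)) : 'M[R[i]]_(n, m) :=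
  \matrix_(i, j) (A j i)^*.

Definition dyad (R : realType) (m : nat) (v w : 'cV[R[i]]_m) : 'M[R[i]]_m :=
  v *m adj w.

Definition e (R : realType) (p i : nat) : 'cV[R[i]]_p :=
  \col_(k < p) ((k == (i %% p)%N :> nat)%:R).

Definition Jmx (R : realType) (p : nat) : 'M[R[i]]_p :=
  \sum_(j < p) dyad (e R p j) (e R p j.+1).

Definition ket2 (R : realType) (p q i j : nat) : 'cV[R[i]]_(p * q) :=
  tensmx (e R p i) (e R q j).

Definition Umx (R : realType) (p q i j : nat) : 'M[R[i]]_(p * q) :=
  tensmx (Jmx R p ^+ i) (Jmx R q ^+ j).

Definition Ltilde (R : realType) (p q : nat) (alpha : 'I_p -> 'I_q -> R)
  (x : 'M[R[i]]_(p * q)) : 'M[R[i]]_(p * q) :=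
  \sum_(i < p) \sum_(j < q)
     ((alpha i j)%:C *: (Umx R p q i j *m x *m adj (Umx R p q i j))) - x.

Definition Ttilde (R : realType) (p q : nat) (alpha : 'I_p -> 'I_q -> R) (t : R)
  (x : 'M[R[i]]_(p * q)) : 'M[R[i]]_(p * q) :=
  opexp t (Ltilde alpha) x.

Definition alpha' (R : realType) (p q : nat) (alpha : 'I_p -> 'I_q -> R)
  (i : 'I_p) (j : 'I_q) : R[i] :=
  if (i == 0 :> nat) && (j == 0 :> nat) then -1 else (alpha i j)%:C.

Definition lambda (R : realType) (p q : nat) (alpha : 'I_p -> 'I_q -> R)
  (wp wq : R[i]) (k l : nat) : R[i] :=
  \sum_(i < p) \sum_(j < q)
     alpha' alpha i j * (wp^*) ^+ (i * k) * (wq^*) ^+ (j * l).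

Definition Phi (R : realType) (p q : nat) (alpha : 'I_p -> 'I_q -> R)
  (wp wq : R[i]) (m n : nat) (t : R) : R[i] :=
  \sum_(k < p) \sum_(l < q)
     wp ^+ (m * k) * wq ^+ (n * l) * cexp (t%:C * lambda alpha wp wq k l).

(* (id (x) T) on M_n (x) M_n = M_(n*n) (Kronecker identification):
   E_ab (x) Y  |->  E_ab (x) T(Y) *)
Definition idtens (R : realType) (n : nat) (T : 'M[R[i]]_n -> 'M[R[i]]_n)
  (X : 'M[R[i]]_(n * n)) : 'M[R[i]]_(n * n) :=
  \sum_(a < n) \sum_(b < n)
     tensmx (delta_mx a b)
       (T (\matrix_(c < n, d < n) X (mxtens_index (a, c)) (mxtens_index (b, d)))).

Definition uvec (R : realType) (p q m n : nat) : 'cV[R[i]]_((p * q) * (p * q)) :=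
  (Num.sqrt ((p * q)%:R : R))^-1%:C *:
    \sum_(i < p) \sum_(j < q) tensmx (ket2 R p q i j) (ket2 R p q (m + i) (n + j)).

Definition Omega_rho (R : realType) (p q : nat) : 'cV[R[i]]_((p * q) * (p * q)) :=
  (Num.sqrt ((p * q)%:R : R))^-1%:C *:
    \sum_(i < p) \sum_(j < q) tensmx (ket2 R p q i j) (ket2 R p q i j).

Definition Omega_tilde (R : realType) (p q : nat) (alpha : 'I_p -> 'I_q -> R) (t : R)
  : 'M[R[i]]_((p * q) * (p * q)) :=
  idtens (Ttilde alpha t) (dyad (Omega_rho R p q) (Omega_rho R p q)).

From HB Require Import structures.
From mathcomp Require Import all_boot all_order all_algebra.
From mathcomp Require Import all_classical all_reals all_analysis.
From mathcomp Require Import complex mxtens.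
Set Implicit Arguments.
Unset Strict Implicit.
Unset Printing Implicit Defensive.
Import Order.TTheory GRing.Theory Num.Theory.
Import numFieldNormedType.Exports.
Import ComplexField.Normc.
Local Open Scope ring_scope.
Local Open Scope complex_scope.
Local Open Scope classical_set_scope.

(* Conjugation by U_ab = J_p^a (x) J_q^b maps the dyad |e_(m+i) (x) e_(n+j)><e_(m+i') (x) e_(n+j')|
   to the same dyad with (m, n) shifted by (-a, -b).  Hence the discrete Fourier transforms of
   these dyads in (m, n) are eigenvectors of the generator Ltilde, the mode (k, l) having
   eigenvalue lambda_kl.  By Fourier inversion the dyad at (m, n) = (0, 0) is the average of the
   modes, so exp(t Ltilde) multiplies mode (k, l) by exp(t lambda_kl), and transforming back
   yields the coefficients Phi_(p-m,q-n)(t).  For (ii), the (a, b) block of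
   |Omega_rho><Omega_rho| is (1/pq)|e_a><e_b|, and |u_mn><u_mn| is assembled from the same
   blocks shifted by (m, n). *)

Lemma sum_ord_shift (V : zmodType) (h : nat -> V) p s :
  (forall m, h (m + p)%N = h m) -> \sum_(m < p) h (m + s)%N = \sum_(m < p) h m.
Proof.
move=> h_per; elim: s => [|s IH]; first by apply: eq_bigr => m _; rewrite addn0.
rewrite -{}IH; case: p h_per => [|p] h_per; first by rewrite !big_ord0.
under eq_bigr do rewrite addnS -addSn.
by rewrite big_ord_recr big_ord_recl /= add0n (addnC p.+1) h_per addrC /bump.
Qed.

Lemma sum_ord2_eq0 (V : zmodType) p q (G : nat -> nat -> V) : (0 < p)%N -> (0 < q)%N ->
  \sum_(a < p) \sum_(b < q) (if ((a : nat) == 0%N) && ((b : nat) == 0%N) then G a b else 0)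
  = G 0%N 0%N.
Proof. by case: p q => [|p] [|q] // _ _; rewrite big_ord_recl big_ord_recl /= !big1 ?addr0. Qed.

Lemma exchange_big_pair (V : zmodType) a b c d (F : 'I_a -> 'I_b -> 'I_c -> 'I_d -> V) :
  \sum_k \sum_l \sum_m \sum_n F k l m n = \sum_m \sum_n \sum_k \sum_l F k l m n.
Proof.
under eq_bigr do rewrite exchange_big.
rewrite exchange_big.
under eq_bigr do under eq_bigr do rewrite exchange_big.
by under eq_bigr do rewrite exchange_big.
Qed.

Lemma sum_mxtens_unindex (V : zmodType) (F : nat -> nat -> V) p q :
  \sum_(i < p) \sum_(j < q) F i j =
  \sum_(a < p * q) F (mxtens_unindex a).1 (mxtens_unindex a).2.
Proof.
rewrite pair_bigA (reindex (@mxtens_unindex p q)) //=.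
by exists (@mxtens_index p q) => x _; [exact: mxtens_unindexK | exact: mxtens_indexK].
Qed.

Lemma prim_root_sum_exp (F : fieldType) N (w : F) m : N.-primitive_root w -> (m < N)%N ->
  \sum_(k < N) w ^+ (m * k) = if m == 0%N then N%:R else 0.
Proof.
move=> w_prim ltmN; case: eqP => [->|/eqP m_neq0].
  by under eq_bigr do rewrite mul0n expr0; rewrite sumr_const card_ord.
have wm_neq1 : w ^+ m != 1.
  rewrite -(prim_order_dvd w_prim); apply: contraTN ltmN; rewrite -leqNgt.
  by apply: dvdn_leq; rewrite lt0n.
have : (w ^+ m - 1) * \sum_(k < N) w ^+ (m * k) = 0.
  under eq_bigr do rewrite exprM.
  by rewrite -subrX1 -exprM mulnC exprM (prim_expr_order w_prim) expr1n subrr.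
by move/eqP; rewrite mulf_eq0 subr_eq0 (negbTE wm_neq1) => /eqP.
Qed.

Section ComplexExponential.
Variable R : realType.

Lemma cvg_real_complex (u : nat -> R) (l : R) :
  u @ \oo --> l -> (fun n => (u n)%:C : R[i]^o) @ \oo --> (l%:C : R[i]^o).
Proof.
move=> /cvgrPdist_lt cu; apply/cvgrPdist_lt => e e0.
have [Ime0 Ree0] : complex.Im e = 0 /\ 0 < complex.Re e.
  by move: e0; rewrite ltcE /= => /andP[/eqP -> ->].
have -> : e = (complex.Re e)%:C by case: e e0 Ime0 {Ree0} => a b /= _ ->.
apply: filterS (cu _ Ree0) => n; rewrite -rmorphB normc_def /= expr0n addr0.
by rewrite sqrtr_sqr ltcR.
Qed.

Lemma cvgn_complex (f : nat -> R[i]^o) :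
  cvgn (fun n => complex.Re (f n)) -> cvgn (fun n => complex.Im (f n)) -> cvgn f.
Proof.
move=> /cvg_ex[a fa] /cvg_ex[b fb]; apply/cvg_ex; exists (a%:C + 'i * b%:C).
rewrite [f](_ : _ = fun n => (complex.Re (f n))%:C + 'i * (complex.Im (f n))%:C).
  by apply: cvgD; [|apply: cvgMl_tmp]; exact: cvg_real_complex.
by apply: funext => n; rewrite -complexE.
Qed.

Lemma cvgn_cexp_series (z : R[i]) :
  cvgn (fun N => \sum_(k < N) ((z ^+ k / (k`!)%:R) : R[i]^o)).
Proof.
pose a k : R[i] := z ^+ k / (k`!)%:R.
have norm_a k : normc (a k) = exp_coeff (normc z) k.
  rewrite /a normcM normcV /exp_coeff /=; congr (_ / _).
    by elim: k => [|k IH]; rewrite ?normc1 // !exprS normcM IH.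
  rewrite -(rmorph_nat (real_complex R)) /normc /= expr0n addr0 sqrtr_sqr.
  by rewrite ger0_norm.
have dominated (g : {linear Rcomplex R -> R^o}) : (forall w, `|g w| <= normc w) ->
    cvgn (fun N => g (\sum_(k < N) (a k : R[i]^o))).
  move=> g_le; under eq_fun do rewrite linear_sum -(big_mkord xpredT (g \o a)).
  apply: normed_cvg; apply: (series_le_cvg _ _ _ (is_cvg_series_exp_coeff (normc z))).
  - by move=> n; exact: normr_ge0.
  - by move=> n; rewrite -norm_a; case: (a n) => x y; exact: sqrtr_ge0.
  - by move=> n; rewrite /= -norm_a.
by apply: cvgn_complex; apply: dominated => -[x y]; rewrite /normc /= -sqrtr_sqr;
  apply: ler_wsqrtr; rewrite ?lerDl ?lerDr sqr_ge0.
Qed.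

End ComplexExponential.

Section UnitCircle.
Variable R : realType.

Lemma prim_root_conj N (w : R[i]) : N.-primitive_root w -> N.-primitive_root w^*%R.
Proof. by rewrite fmorph_primitive_root. Qed.

Lemma prim_root_conjE N (w : R[i]) : N.-primitive_root w -> w^*%R = w^-1.
Proof.
move=> w_prim; have N_gt0 := prim_order_gt0 w_prim.
have w_neq0 : w != 0 by rewrite (prim_root_eq0 w_prim) -lt0n.
have : `|w| ^+ N == 1 by rewrite -normrX (prim_expr_order w_prim) normr1.
rewrite pexpr_eq1 // => /eqP norm_w1.
by rewrite -[w^*%R]mul1r -(mulVf w_neq0) -mulrA -normCK norm_w1 expr1n mulr1.
Qed.

Lemma prim_root_expr_subn N (w : R[i]) m k : N.-primitive_root w -> (m <= N)%N ->
  w ^+ ((N - m) * k) = w^*%R ^+ (m * k).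
Proof.
move=> w_prim le_mN; have wmk_neq0 : w ^+ (m * k) != 0.
  by rewrite expf_neq0 // (prim_root_eq0 w_prim) -lt0n (prim_order_gt0 w_prim).
rewrite (prim_root_conjE w_prim) exprVn -[LHS]mulr1 -(mulfV wmk_neq0) mulrA -exprD.
by rewrite -mulnDl subnK // exprM (prim_expr_order w_prim) expr1n mul1r.
Qed.

End UnitCircle.

Section OperatorExponential.
Variables (R : realType) (n : nat) (L : {linear 'M[R[i]]_n -> 'M[R[i]]_n}).

Lemma opexp_eigen (I : finType) (V : I -> 'M[R[i]]_n) (lam c : I -> R[i]) (t : R) :
  (forall k, L (V k) = lam k *: V k) ->
  opexp t L (\sum_k c k *: V k) = \sum_k (c k * cexp (t%:C * lam k)) *: V k.
Proof.
move=> LV.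
have iterV N : iter N L (\sum_k c k *: V k) = \sum_k (c k * lam k ^+ N) *: V k.
  elim: N => [|N IH]; first by apply: eq_bigr => k _; rewrite mulr1.
  rewrite iterS IH linear_sum; apply: eq_bigr => k _.
  by rewrite linearZ /= LV exprSr mulrA -!scalerA.
rewrite /opexp; apply: (@cvg_lim ('M[R[i]]_n : normedModType R[i])) => //.
have -> : (fun N => \sum_(N' < N) ((t ^+ N' / (N'`!)%:R)%:C *: iter N' L (\sum_k c k *: V k))) =
    (fun N => \sum_k (c k * \sum_(N' < N) ((t%:C * lam k) ^+ N' / (N'`!)%:R)) *: V k).
  apply: funext => N; under eq_bigr do rewrite iterV scaler_sumr.
  rewrite exchange_big; apply: eq_bigr => k _.
  rewrite mulr_sumr scaler_suml; apply: eq_bigr => N' _; rewrite scalerA; congr (_ *: _).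
  rewrite rmorphM rmorphXn fmorphV rmorph_nat exprMn.
  by rewrite mulrCA mulrAC.
apply: cvg_big => [|k _]; first exact: add_continuous.
by apply: cvgZr_tmp; apply: cvgMl_tmp; exact: cvgn_cexp_series.
Qed.

End OperatorExponential.

Section AdjointAndTensor.
Variable R : realType.
Local Notation C := R[i].

Lemma adjM m n k (A : 'M[C]_(m, n)) (B : 'M[C]_(n, k)) : adj (A *m B) = adj B *m adj A.
Proof.
apply/matrixP => i j; rewrite !mxE rmorph_sum; apply: eq_bigr => l _.
by rewrite !mxE rmorphM mulrC.
Qed.

Lemma adjZ m n c (A : 'M[C]_(m, n)) : adj (c *: A) = c^* *: adj A.
Proof. by apply/matrixP => i j; rewrite !mxE rmorphM. Qed.

Lemma adj_sum m n (I : finType) (F : I -> 'M[C]_(m, n)) :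
  adj (\sum_i F i) = \sum_i adj (F i).
Proof.
apply/matrixP => a b; rewrite !mxE !summxE rmorph_sum.
by apply: eq_bigr => i _; rewrite mxE.
Qed.

Lemma adj_tens m n k l (A : 'M[C]_(m, n)) (B : 'M[C]_(k, l)) :
  adj (tensmx A B) = tensmx (adj A) (adj B).
Proof. by apply/matrixP => i j; rewrite !mxE rmorphM. Qed.

Lemma dyad_conj n (U : 'M[C]_n) v w : U *m dyad v w *m adj U = dyad (U *m v) (U *m w).
Proof. by rewrite /dyad adjM !mulmxA. Qed.

Lemma dyad_delta n (a b : 'I_n) : dyad (delta_mx a 0) (delta_mx b 0) = delta_mx a b :> 'M[C]_n.
Proof.
rewrite /dyad; have -> : adj (delta_mx b 0 : 'cV[C]_n) = delta_mx 0 b.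
  by apply/matrixP => r s; rewrite !mxE conjc_nat andbC.
exact: mul_delta_mx.
Qed.

Lemma tens_dyad m n (u1 u2 : 'cV[C]_m) (w1 w2 : 'cV[C]_n) :
  dyad (tensmx u1 w1) (tensmx u2 w2) = tensmx (dyad u1 u2) (dyad w1 w2).
Proof. by have := tensmx_mul u1 w1 (adj u2) (adj w2); rewrite -adj_tens. Qed.

Lemma tensmxZr m n k l (A : 'M[C]_(m, n)) (B : 'M[C]_(k, l)) c :
  tensmx A (c *: B) = c *: tensmx A B.
Proof. by apply/matrixP => r s; rewrite !mxE mulrCA. Qed.

Lemma tensmx_sumr m n k l (A : 'M[C]_(m, n)) (I : finType) (F : I -> 'M[C]_(k, l)) :
  tensmx A (\sum_i F i) = \sum_i tensmx A (F i).
Proof.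
apply/matrixP => r s; rewrite !mxE !summxE mulr_sumr.
by apply: eq_bigr => i _; rewrite !mxE.
Qed.

Lemma tens_col_entry m n (u : 'cV[C]_m) (v : 'cV[C]_n) a c (z : 'I_(1 * 1)) :
  tensmx u v (mxtens_index (a, c)) z = u a 0 * v c 0.
Proof. by rewrite mxE mxtens_indexK /= !ord1. Qed.

End AdjointAndTensor.

Section Shift.
Variables (R : realType) (p : nat).

Lemma e_addr_period i : e R p (i + p) = e R p i.
Proof. by rewrite /e modnDr. Qed.

Lemma Jmx_entry r c : Jmx R p r c = ((c : nat) == (r.+1 %% p)%N)%:R.
Proof.
rewrite /Jmx summxE (bigD1 r) //= big1 ?addr0 => [|j /negbTE neq_jr];
  rewrite /dyad !mxE big_ord1 !mxE conjc_nat modn_small //.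
  by rewrite eqxx mul1r.
by rewrite eq_sym val_eqE neq_jr mul0r.
Qed.

Lemma Jmx_e_succ x : Jmx R p *m e R p x.+1 = e R p x.
Proof.
apply/matrixP => r z; rewrite ord1 !mxE.
have p_gt0 : (0 < p)%N by apply: leq_ltn_trans (ltn_ord r).
rewrite (bigD1 (Ordinal (ltn_pmod r.+1 p_gt0))) //= big1 ?addr0 => [|c neq_c].
  rewrite Jmx_entry !mxE /= eqxx mul1r -[X in _ = (X == _)%:R](modn_small (ltn_ord r)).
  by rewrite -[r.+1]addn1 -[x.+1]addn1 eqn_modDr.
rewrite Jmx_entry; case: eqP => [eq_c|]; last by rewrite mul0r.
by move: neq_c; rewrite -val_eqE /= eq_c eqxx.
Qed.

Lemma Jpow_e_addr a x : Jmx R p ^+ a *m e R p (x + a) = e R p x.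
Proof.
elim: a x => [|a IH] x; first by rewrite expr0 mul1mx addn0.
by rewrite exprSr -mulmxA addnS Jmx_e_succ IH.
Qed.

Lemma Jpow_e a x : (a <= p)%N -> Jmx R p ^+ a *m e R p x = e R p (x + (p - a)).
Proof.
by move=> le_ap; rewrite -(Jpow_e_addr a (x + (p - a))) -addnA subnK // e_addr_period.
Qed.

End Shift.

Section ProductBasis.
Variables (R : realType) (p q : nat).

Lemma ket2_addl_period m n : ket2 R p q (m + p) n = ket2 R p q m n.
Proof. by rewrite /ket2 e_addr_period. Qed.

Lemma ket2_addr_period m n : ket2 R p q m (n + q) = ket2 R p q m n.
Proof. by rewrite /ket2 e_addr_period. Qed.

Lemma Umx_ket2 (a : 'I_p) (b : 'I_q) x y :
  Umx R p q a b *m ket2 R p q x y = ket2 R p q (x + (p - a)) (y + (q - b)).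
Proof.
have := tensmx_mul (Jmx R p ^+ a) (Jmx R q ^+ b) (e R p x) (e R q y).
by rewrite !Jpow_e 1?ltnW.
Qed.

Lemma Ltilde_is_linear (alpha : 'I_p -> 'I_q -> R) : linear (Ltilde alpha).
Proof.
move=> c x y; rewrite /Ltilde.
under eq_bigr do under eq_bigr do
  rewrite mulmxDr mulmxDl -scalemxAr -scalemxAl scalerDr scalerA mulrC -scalerA.
under eq_bigr do rewrite big_split /= -scaler_sumr.
by rewrite big_split /= -scaler_sumr scalerBr opprD addrACA.
Qed.

Lemma ket2_delta (a : 'I_(p * q)) :
  ket2 R p q (mxtens_unindex a).1 (mxtens_unindex a).2 = delta_mx a 0.
Proof.
case: (mxtens_indexP a) => a1 a2; rewrite mxtens_indexK /=.
apply/matrixP => r z; case: (mxtens_indexP r) => r1 r2.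
rewrite /ket2 tens_col_entry !mxE !modn_small // (ord1 z) eqxx andbT -natrM mulnb.
by rewrite (inj_eq (can_inj (@mxtens_indexK _ _))) xpair_eqE.
Qed.

End ProductBasis.

HB.instance Definition _ (R : realType) p q (alpha : 'I_p -> 'I_q -> R) :=
  GRing.isLinear.Build R[i] 'M[R[i]]_(p * q) 'M[R[i]]_(p * q) _ (Ltilde alpha)
    (Ltilde_is_linear alpha).

Section FourierModes.
Variables (R : realType) (p q : nat) (p_gt0 : (0 < p)%N) (q_gt0 : (0 < q)%N).
Variable alpha : 'I_p -> 'I_q -> R.
Hypothesis alpha00 : forall (i : 'I_p) (j : 'I_q),
  (i = 0 :> nat) -> (j = 0 :> nat) -> alpha i j = 0.
Variables (wp wq : R[i]).
Hypotheses (wp_prim : p.-primitive_root wp) (wq_prim : q.-primitive_root wq).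

Definition chi (k l m n : nat) : R[i] := wp^*%R ^+ (m * k) * wq^*%R ^+ (n * l).

Lemma chi_periodl k l m n : chi k l (m + p) n = chi k l m n.
Proof.
rewrite /chi mulnDl exprD (exprM _ p) (prim_expr_order (prim_root_conj wp_prim)).
by rewrite expr1n mulr1.
Qed.

Lemma chi_periodr k l m n : chi k l m (n + q) = chi k l m n.
Proof.
rewrite /chi mulnDl exprD (exprM _ q) (prim_expr_order (prim_root_conj wq_prim)).
by rewrite expr1n mulr1.
Qed.

Lemma chi_shift k l (a : 'I_p) (b : 'I_q) m n :
  chi k l m n = chi k l a b * chi k l (m + (p - a)) (n + (q - b)).
Proof.
rewrite -[LHS]chi_periodl -chi_periodr /chi mulrACA -!exprD -!mulnDl.
by rewrite !(addnCA a) !(addnCA b) !subnKC // ltnW.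
Qed.

Lemma lambdaE k l :
  lambda alpha wp wq k l = \sum_(a < p) \sum_(b < q) (alpha a b)%:C * chi k l a b - 1.
Proof.
have alpha'E a b : alpha' alpha a b * chi k l a b = (alpha a b)%:C * chi k l a b -
    (if ((a : nat) == 0%N) && ((b : nat) == 0%N) then 1 else 0).
  rewrite /alpha'; case: ifP => [/andP[/eqP a0 /eqP b0]|_]; last by rewrite subr0.
  by rewrite alpha00 // /chi a0 b0 !expr0 !mulr1 rmorph0 sub0r.
rewrite -(sum_ord2_eq0 (fun _ _ => 1 : R[i]) p_gt0 q_gt0) -sumrB.
apply: eq_bigr => a _; rewrite -sumrB; apply: eq_bigr => b _.
by rewrite -alpha'E /chi mulrA.
Qed.

Lemma Phi_subn m n t : (m <= p)%N -> (n <= q)%N ->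
  Phi alpha wp wq (p - m) (q - n) t =
  \sum_(k < p) \sum_(l < q) chi k l m n * cexp (t%:C * lambda alpha wp wq k l).
Proof.
move=> le_mp le_nq; apply: eq_bigr => k _; apply: eq_bigr => l _.
by rewrite /chi !prim_root_expr_subn.
Qed.

Section FixedIndices.
Variables i j i' j' : nat.

Definition shifted_dyad (m n : nat) : 'M[R[i]]_(p * q) :=
  dyad (ket2 R p q (m + i) (n + j)) (ket2 R p q (m + i') (n + j')).

Definition fourier_mode (k l : nat) : 'M[R[i]]_(p * q) :=
  \sum_(m < p) \sum_(n < q) chi k l m n *: shifted_dyad m n.

Lemma shifted_dyad_periodl m n : shifted_dyad (m + p) n = shifted_dyad m n.
Proof. by rewrite /shifted_dyad !(addnAC _ p) !ket2_addl_period. Qed.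

Lemma shifted_dyad_periodr m n : shifted_dyad m (n + q) = shifted_dyad m n.
Proof. by rewrite /shifted_dyad !(addnAC _ q) !ket2_addr_period. Qed.

Lemma Umx_shifted_dyad (a : 'I_p) (b : 'I_q) m n :
  Umx R p q a b *m shifted_dyad m n *m adj (Umx R p q a b) =
  shifted_dyad (m + (p - a)) (n + (q - b)).
Proof. by rewrite dyad_conj !Umx_ket2 ![(_ + _ + (_ - _))%N]addnAC. Qed.

Lemma Umx_fourier_mode (a : 'I_p) (b : 'I_q) k l :
  Umx R p q a b *m fourier_mode k l *m adj (Umx R p q a b) = chi k l a b *: fourier_mode k l.
Proof.
pose g m n := chi k l m n *: shifted_dyad m n.
have g_periodl m n : g (m + p)%N n = g m n by rewrite /g chi_periodl shifted_dyad_periodl.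
have g_periodr m n : g m (n + q)%N = g m n by rewrite /g chi_periodr shifted_dyad_periodr.
transitivity (chi k l a b *: \sum_(m < p) \sum_(n < q) g (m + (p - a))%N (n + (q - b))%N).
  rewrite /fourier_mode mulmx_sumr mulmx_suml scaler_sumr; apply: eq_bigr => m _.
  rewrite mulmx_sumr mulmx_suml scaler_sumr; apply: eq_bigr => n _.
  by rewrite -scalemxAr -scalemxAl Umx_shifted_dyad (chi_shift _ _ a b) -scalerA.
under eq_bigr do rewrite (@sum_ord_shift _ (g _)) //.
rewrite (@sum_ord_shift _ (fun m => \sum_(n < q) g m n)) // => m.
by under eq_bigr do rewrite g_periodl.
Qed.

Lemma Ltilde_fourier_mode k l :
  Ltilde alpha (fourier_mode k l) = lambda alpha wp wq k l *: fourier_mode k l.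
Proof.
rewrite /Ltilde lambdaE scalerBl scale1r scaler_suml; congr (_ - _).
apply: eq_bigr => a _; rewrite scaler_suml; apply: eq_bigr => b _.
by rewrite Umx_fourier_mode scalerA.
Qed.

Lemma shifted_dyad00E :
  shifted_dyad 0 0 = ((p * q)%:R)^-1 *: \sum_(k < p) \sum_(l < q) fourier_mode k l.
Proof.
have chi_sum (m : 'I_p) (n : 'I_q) : \sum_(k < p) \sum_(l < q) chi k l m n =
    if ((m : nat) == 0%N) && ((n : nat) == 0%N) then (p * q)%:R else 0.
  rewrite /chi; under eq_bigr do rewrite -mulr_sumr.
  rewrite -mulr_suml !prim_root_sum_exp ?prim_root_conj //.
  by case: eqP; case: eqP; rewrite ?natrM ?mulr0 ?mul0r.
have pq_neq0 : (p * q)%:R != 0 :> R[i].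
  by rewrite pnatr_eq0 muln_eq0 negb_or -!lt0n p_gt0 q_gt0.
have coef_sum (m : 'I_p) (n : 'I_q) :
    \sum_(k < p) \sum_(l < q) chi k l m n *: shifted_dyad m n =
    if ((m : nat) == 0%N) && ((n : nat) == 0%N) then (p * q)%:R *: shifted_dyad m n else 0.
  under eq_bigr do rewrite -scaler_suml.
  by rewrite -scaler_suml chi_sum; case: ifP; rewrite ?scale0r.
rewrite /fourier_mode exchange_big_pair; under eq_bigr do under eq_bigr do rewrite coef_sum.
rewrite (sum_ord2_eq0 (fun m n => (p * q)%:R *: shifted_dyad m n)) //.
by rewrite scalerA mulVf // scale1r.
Qed.

Lemma Ttilde_shifted_dyad00 c t :
  Ttilde alpha t (c *: shifted_dyad 0 0) =
  (c / (p * q)%:R) *: \sum_(m < p) \sum_(n < q)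
    Phi alpha wp wq (p - m) (q - n) t *: shifted_dyad m n.
Proof.
set c' := c / _.
rewrite shifted_dyad00E scalerA scaler_sumr; under eq_bigr do rewrite scaler_sumr.
rewrite pair_bigA /= /Ttilde.
rewrite (opexp_eigen (lam := fun x : 'I_p * 'I_q => lambda alpha wp wq x.1 x.2)); last first.
  by move=> x; exact: Ltilde_fourier_mode.
rewrite -(pair_bigA _ (fun (k : 'I_p) (l : 'I_q) =>
  (c' * cexp (t%:C * lambda alpha wp wq k l)) *: fourier_mode k l)) /=.
rewrite scaler_sumr /fourier_mode.
under eq_bigr do under eq_bigr do rewrite scaler_sumr.
under eq_bigr do under eq_bigr do under eq_bigr do rewrite scaler_sumr.
rewrite exchange_big_pair; apply: eq_bigr => m _; rewrite scaler_sumr; apply: eq_bigr => n _.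
rewrite Phi_subn 1?ltnW // scalerA mulr_sumr scaler_suml; apply: eq_bigr => k _.
rewrite mulr_sumr scaler_suml; apply: eq_bigr => l _.
by rewrite scalerA -mulrA [_ * chi _ _ _ _]mulrC.
Qed.

End FixedIndices.

Local Notation s0 := ((Num.sqrt ((p * q)%:R : R))^-1%:C : R[i]).
Local Notation kappa := (s0 * s0^*).
Local Notation block_dyad a b :=
  (shifted_dyad (mxtens_unindex a).1 (mxtens_unindex a).2
               (mxtens_unindex b).1 (mxtens_unindex b).2).

Lemma Omega_rho_entry (a c : 'I_(p * q)) z :
  Omega_rho R p q (mxtens_index (a, c)) z = s0 * (a == c)%:R.
Proof.
rewrite /Omega_rho mxE.
rewrite (sum_mxtens_unindex (fun i j => tensmx (ket2 R p q i j) (ket2 R p q i j))).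
under eq_bigr do rewrite ket2_delta.
rewrite summxE (bigD1 a) //= big1 ?addr0 => [|a' neq_a'a]; rewrite tens_col_entry !mxE.
  by rewrite !eqxx /= andbT mul1r eq_sym.
by rewrite eq_sym (negbTE neq_a'a) mul0r.
Qed.

Lemma Omega_rho_dyad_block (a b : 'I_(p * q)) :
  \matrix_(c, d) dyad (Omega_rho R p q) (Omega_rho R p q)
     (mxtens_index (a, c)) (mxtens_index (b, d)) = kappa *: block_dyad a b 0 0.
Proof.
rewrite /shifted_dyad !add0n !ket2_delta dyad_delta.
apply/matrixP => c d; rewrite !mxE big_ord1 [adj _ _ _]mxE !Omega_rho_entry.
rewrite [(_ * _)^*%C]rmorphM rmorph_nat mulrACA -natrM mulnb.
by rewrite [c == a]eq_sym [d == b]eq_sym.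
Qed.

Lemma dyad_uvec m n :
  dyad (uvec R p q m n) (uvec R p q m n) =
  kappa *: \sum_(a < p * q) \sum_(b < p * q) tensmx (delta_mx a b) (block_dyad a b m n).
Proof.
rewrite /uvec.
rewrite (sum_mxtens_unindex (fun i j => tensmx (ket2 R p q i j) (ket2 R p q (m + i) (n + j)))).
under eq_bigr do rewrite ket2_delta.
rewrite /dyad adjZ adj_sum -scalemxAl -scalemxAr scalerA mulmx_suml.
congr (_ *: _); apply: eq_bigr => a _; rewrite mulmx_sumr; apply: eq_bigr => b _.
by rewrite /shifted_dyad -dyad_delta; exact: tens_dyad.
Qed.

Lemma Omega_tildeE t :
  Omega_tilde alpha t =
  ((p * q)%:R)^-1 *: \sum_(m < p) \sum_(n < q)
    Phi alpha wp wq (p - m) (q - n) t *: dyad (uvec R p q m n) (uvec R p q m n).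
Proof.
rewrite /Omega_tilde /idtens.
under eq_bigr do under eq_bigr do rewrite Omega_rho_dyad_block Ttilde_shifted_dyad00.
under [in RHS]eq_bigr do under eq_bigr do rewrite dyad_uvec.
transitivity (kappa / (p * q)%:R *:
  \sum_(a < p * q) \sum_(b < p * q) \sum_(m < p) \sum_(n < q)
    Phi alpha wp wq (p - m) (q - n) t *: tensmx (delta_mx a b) (block_dyad a b m n)).
  rewrite scaler_sumr; apply: eq_bigr => a _; rewrite scaler_sumr; apply: eq_bigr => b _.
  rewrite tensmxZr tensmx_sumr; congr (_ *: _); apply: eq_bigr => m _.
  by rewrite tensmx_sumr; apply: eq_bigr => n _; rewrite tensmxZr.
rewrite exchange_big_pair mulrC -scalerA; congr (_ *: _).
rewrite scaler_sumr; apply: eq_bigr => m _; rewrite scaler_sumr; apply: eq_bigr => n _.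
rewrite [RHS]scalerA [in RHS]mulrC -[RHS]scalerA; congr (_ *: _).
by rewrite scaler_sumr; apply: eq_bigr => a _; rewrite scaler_sumr.
Qed.

End FourierModes.

Theorem mainTheorem10 (R : realType) (p q : nat) (hp : (0 < p)%N) (hq : (0 < q)%N)
  (alpha : 'I_p -> 'I_q -> R)
  (alpha_ge0 : forall i j, 0 <= alpha i j)
  (alpha_le1 : forall i j, alpha i j <= 1)
  (alpha_sum : \sum_(i < p) \sum_(j < q) alpha i j = 1)
  (alpha00 : forall (i : 'I_p) (j : 'I_q),
     (i = 0 :> nat) -> (j = 0 :> nat) -> alpha i j = 0)
  (wp wq : R[i]) (hwp : p.-primitive_root wp) (hwq : q.-primitive_root wq) :
  (forall (i j i' j' : nat) (t : R), 0 <= t ->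
     Ttilde alpha t (dyad (ket2 R p q i j) (ket2 R p q i' j')) =
       ((p * q)%:R : R[i])^-1 *:
         \sum_(m < p) \sum_(n < q)
           Phi alpha wp wq (p - m)%N (q - n)%N t *:
             dyad (ket2 R p q (m + i) (n + j)) (ket2 R p q (m + i') (n + j')))
  /\
  (forall t : R, 0 <= t ->
     Omega_tilde alpha t =
       ((p * q)%:R : R[i])^-1 *:
         \sum_(m < p) \sum_(n < q)
           Phi alpha wp wq (p - m)%N (q - n)%N t *: dyad (uvec R p q m n) (uvec R p q m n)).
Proof.
split => [i j i' j' t _ | t _]; last exact: Omega_tildeE.
have := Ttilde_shifted_dyad00 hp hq alpha00 hwp hwq i j i' j' 1 t.
by rewrite scale1r mul1r /shifted_dyad !add0n.
Qed.
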